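(* Let $(X,d,\ll,\le,\tau)$ be a Lorentzian length space such that the metric space $(X,d)$ is locally compact. If $(X,d,\ll,\le,\tau)$ is stably causal, then it is strongly causal.
   Context: A causal space $(X,\ll,\le)$ is a set $X$ with two transitive relations $\ll,\le$ such that $\le$ is reflexive and $x\ll y\Rightarrow x\le y$; write $p<q$ if $p\le q$ and $p\neq q$. Set $I^+(x)=\{y: x\ll y\}$, $I^-(x)=\{y: y\ll x\}$, $J^+(x)=\{y:x\le y\}$, $J^-(x)=\{y:y\le x\}$. A Lorentzian pre-length space $(X,d,\ll,\le,\tau)$ is a causal space together with a metric $d$ on $X$ and a function $\tau:X\times X\to[0,\infty]$ that is lower semicontinuous with respect to the topology of $d$, satisfies $\tau(x,z)\ge\tau(x,y)+\tau(y,z)$ whenever $x\le y\le z$, $\tau(x,y)=0$ if $x\not\le y$, and $\tau(x,y)>0\iff x\ll y$. All topological notions refer to the metric topology of $d$. A future directed causal (resp. timelike) curve is a non-constant Lipschitz map $\gamma:I\to X$ ($I\subset\mathbb R$ an interval) with $\gamma(s)\le\gamma(t)$ (resp. $\gamma(s)\ll\gamma(t)$) for all $s<t$. For a future directed causal $\gamma:[a,b]\to X$, $L_\tau(\gamma)=\inf\sum_{i=0}^{N-1}\tau(\gamma(t_i),\gamma(t_{i+1}))$ over all partitions $a=t_0<\dots<t_N=b$. The space is causally path connected if whenever $x\le y$ (resp. $x\ll y$) there is a future directed causal (resp. timelike) curve from $x$ to $y$. For open $U\subset X$, $p\le_U q$ means there is a future directed causal curve from $p$ to $q$ with image in $U$.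 A neighborhood $U$ is causally closed if whenever $p_n\le_U q_n$ with $p_n\to p\in U$, $q_n\to q\in U$, then $p\le_U q$; the space is locally causally closed if every point has a causally closed neighborhood. The space is localizable if every $x$ has a neighborhood $\Omega_x$ such that: (i) all causal curves contained in $\Omega_x$ have uniformly bounded $d$-length; (ii) there is a continuous $\omega_x:\Omega_x\times\Omega_x\to[0,\infty)$ such that $(\Omega_x,d|_{\Omega_x\times\Omega_x},\ll|_{\Omega_x},\le|_{\Omega_x},\omega_x)$ is a Lorentzian pre-length space, and $I^\pm(y)\cap\Omega_x\ne\emptyset$ for every $y\in\Omega_x$; (iii) for all $p,q\in\Omega_x$ with $p<q$ there is a future causal curve $\gamma_{p,q}$ from $p$ to $q$ with $L_\tau(\gamma_{p,q})\ge L_\tau(\gamma)$ for every future causal curve $\gamma\subset\Omega_x$ from $p$ to $q$, and $L_\tau(\gamma_{p,q})=\omega_x(p,q)$. A Lorentzian length space is a causally path connected, locally causally closed, localizable Lorentzian pre-length space with $\tau(x,y)=\sup\{L_\tau(\gamma):\gamma$ a future causal curve from $x$ to $y\}$. Causality notions: $K^+\subset X\times X$ is the smallest relation that is transitive, closed in $X\times X$, and contains $J^+=\{(x,y):x\le y\}$; stably causal means $K^+$ is antisymmetric. The Alexandrov topology is the topology on $X$ with subbase $\{I^+(x)\cap I^-(y): x,y\in X\}$; strongly causal means the Alexandrov topology coincides with the metric topology of $d$. *)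

From Stdlib Require Import Reals List.
From Coquelicot Require Import Coquelicot.
Open Scope R_scope.
Set Implicit Arguments.

Section LLS.
Variable X : Type.
Variable d : X -> X -> R.
Variables ll le : X -> X -> Prop.

Definition is_metric : Prop :=
  (forall x y, 0 <= d x y) /\ (forall x y, d x y = 0 <-> x = y) /\
  (forall x y, d x y = d y x) /\ (forall x y z, d x z <= d x y + d y z).

Definition d_open (U : X -> Prop) : Prop :=
  forall x, U x -> exists r, 0 < r /\ forall y, d x y < r -> U y.

Definition neighborhood (x : X) (N : X -> Prop) : Prop :=
  exists V, d_open V /\ V x /\ forall y, V y -> N y.

Definition closed_rel (Rel : X -> X -> Prop) : Prop :=
  forall a b, ~ Rel a b -> exists r, 0 < r /\
    forall a' b', d a a' < r -> d b b' < r -> ~ Rel a' b'.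

Definition d_compact (K : X -> Prop) : Prop :=
  forall (I : Type) (U : I -> X -> Prop), (forall i, d_open (U i)) ->
    (forall x, K x -> exists i, U i x) ->
    exists l : list I, forall x, K x -> exists i, In i l /\ U i x.

Definition locally_compact : Prop :=
  forall x, exists K, neighborhood x K /\ d_compact K.

Definition converges (s : nat -> X) (p : X) : Prop :=
  forall eps, 0 < eps -> exists N, forall n, (N <= n)%nat -> d (s n) p < eps.

Definition transitive_on (S : X -> Prop) (Rel : X -> X -> Prop) : Prop :=
  forall x y z, S x -> S y -> S z -> Rel x y -> Rel y z -> Rel x z.

Definition causal_space_on (S : X -> Prop) : Prop :=
  transitive_on S ll /\ transitive_on S le /\ (forall x, S x -> le x x) /\
  (forall x y, S x -> S y -> ll x y -> le x y).

Definition lsc_on (S : X -> Prop) (t : X -> X -> Rbar) : Prop :=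
  forall x y (r : R), S x -> S y -> Rbar_lt r (t x y) ->
    exists delta, 0 < delta /\ forall x' y', S x' -> S y' ->
      d x x' < delta -> d y y' < delta -> Rbar_lt r (t x' y').

Definition LPLS_on (S : X -> Prop) (t : X -> X -> Rbar) : Prop :=
  causal_space_on S /\
  (forall x y, S x -> S y -> Rbar_le (Finite 0) (t x y)) /\
  lsc_on S t /\
  (forall x y z, S x -> S y -> S z -> le x y -> le y z ->
     Rbar_le (Rbar_plus (t x y) (t y z)) (t x z)) /\
  (forall x y, S x -> S y -> ~ le x y -> t x y = Finite 0) /\
  (forall x y, S x -> S y -> (Rbar_lt (Finite 0) (t x y) <-> ll x y)).

Definition whole (x : X) : Prop := True.

Definition is_interval (I : R -> Prop) : Prop :=
  forall s t u, I s -> I u -> s <= t <= u -> I t.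

Definition lipschitz_on (I : R -> Prop) (g : R -> X) : Prop :=
  exists L, 0 <= L /\ forall s t, I s -> I t -> d (g s) (g t) <= L * Rabs (s - t).

Definition fd_causal_curve (I : R -> Prop) (g : R -> X) : Prop :=
  is_interval I /\ lipschitz_on I g /\
  (exists s t, I s /\ I t /\ g s <> g t) /\
  (forall s t, I s -> I t -> s < t -> le (g s) (g t)).

Definition fd_timelike_curve (I : R -> Prop) (g : R -> X) : Prop :=
  is_interval I /\ lipschitz_on I g /\
  (exists s t, I s /\ I t /\ g s <> g t) /\
  (forall s t, I s -> I t -> s < t -> ll (g s) (g t)).

Definition cint (a b : R) (t : R) : Prop := a <= t <= b.

Definition causal_from_to (g : R -> X) (a b : R) (p q : X) : Prop :=
  a < b /\ fd_causal_curve (cint a b) g /\ g a = p /\ g b = q.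

Definition timelike_from_to (g : R -> X) (a b : R) (p q : X) : Prop :=
  a < b /\ fd_timelike_curve (cint a b) g /\ g a = p /\ g b = q.

(* partitions: t0 < t1 < ... < tN given as t0 and the list [t1;...;tN] *)
Fixpoint incr_from (t0 : R) (l : list R) : Prop :=
  match l with nil => True | t1 :: l' => t0 < t1 /\ incr_from t1 l' end.

Fixpoint chain_sum (f : R -> R -> Rbar) (t0 : R) (l : list R) : Rbar :=
  match l with
  | nil => Finite 0
  | t1 :: l' => Rbar_plus (f t0 t1) (chain_sum f t1 l')
  end.

Definition is_partition (a b : R) (l : list R) : Prop :=
  l <> nil /\ incr_from a l /\ last l a = b.

Definition L_tau (tau : X -> X -> Rbar) (g : R -> X) (a b : R) : Rbar :=
  Rbar_glb (fun v => exists l, is_partition a b l /\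
               v = chain_sum (fun s t => tau (g s) (g t)) a l).

Definition lt_c (x y : X) : Prop := le x y /\ x <> y.

Definition causally_path_connected : Prop :=
  (forall x y, lt_c x y -> exists g a b, causal_from_to g a b x y) /\
  (forall x y, ll x y -> exists g a b, timelike_from_to g a b x y).

Definition le_in (U : X -> Prop) (p q : X) : Prop :=
  p = q \/ exists g a b, causal_from_to g a b p q /\ forall t, cint a b t -> U (g t).

Definition causally_closed (U : X -> Prop) : Prop :=
  forall (pn qn : nat -> X) p q,
    (forall n, le_in U (pn n) (qn n)) -> converges pn p -> converges qn q ->
    U p -> U q -> le_in U p q.

Definition locally_causally_closed : Prop :=
  forall x, exists U, d_open U /\ U x /\ causally_closed U.

Definition localizable (tau : X -> X -> Rbar) : Prop :=
  forall x, exists (Om : X -> Prop) (om : X -> X -> R),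
    neighborhood x Om /\
    (* (i) uniformly bounded d-length of causal curves in Om *)
    (exists C, forall J g, fd_causal_curve J g -> (forall t, J t -> Om (g t)) ->
       forall t0 l, J t0 -> List.Forall J l -> incr_from t0 l ->
         Rbar_le (chain_sum (fun s t => Finite (d (g s) (g t))) t0 l) (Finite C)) /\
    (forall p q, Om p -> Om q -> 0 <= om p q) /\
    (forall p q eps, Om p -> Om q -> 0 < eps -> exists delta, 0 < delta /\
       forall p' q', Om p' -> Om q' -> d p p' < delta -> d q q' < delta ->
         Rabs (om p' q' - om p q) < eps) /\
    LPLS_on Om (fun p q => Finite (om p q)) /\
    (forall y, Om y -> (exists z, Om z /\ ll y z) /\ (exists z, Om z /\ ll z y)) /\
    (forall p q, Om p -> Om q -> lt_c p q ->
       exists g a b, causal_from_to g a b p q /\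
         (forall g' a' b', causal_from_to g' a' b' p q ->
            (forall t, cint a' b' t -> Om (g' t)) ->
            Rbar_le (L_tau tau g' a' b') (L_tau tau g a b)) /\
         L_tau tau g a b = Finite (om p q)).

(* tau(x,y) = sup of tau-lengths of future causal curves from x to y,
   with sup of the empty set = 0 *)
Definition tau_is_sup_length (tau : X -> X -> Rbar) : Prop :=
  forall x y, tau x y =
    Rbar_lub (fun v => v = Finite 0 \/
                exists g a b, causal_from_to g a b x y /\ v = L_tau tau g a b).

Definition LorentzianLengthSpace (tau : X -> X -> Rbar) : Prop :=
  is_metric /\ LPLS_on whole tau /\ causally_path_connected /\
  locally_causally_closed /\ localizable tau /\ tau_is_sup_length tau.

Definition K_plus (x y : X) : Prop :=
  forall Rel : X -> X -> Prop,
    (forall a b c, Rel a b -> Rel b c -> Rel a c) -> closed_rel Rel ->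
    (forall a b, le a b -> Rel a b) -> Rel x y.

Definition stably_causal : Prop :=
  forall x y, K_plus x y -> K_plus y x -> x = y.

Definition diamond (x y : X) (p : X) : Prop := ll x p /\ ll p y.

(* open in the Alexandrov topology: union of finite intersections of
   subbasic sets I^+(x) cap I^-(y) (empty intersection = X) *)
Definition alexandrov_open (U : X -> Prop) : Prop :=
  forall p, U p -> exists l : list (X * X),
    (forall xy, In xy l -> diamond (fst xy) (snd xy) p) /\
    (forall q, (forall xy, In xy l -> diamond (fst xy) (snd xy) q) -> U q).

Definition strongly_causal : Prop :=
  forall U : X -> Prop, alexandrov_open U <-> d_open U.

End LLS.

(** The diamonds [I^+(x) ∩ I^-(y)] are metrically open because [tau] is lower
    semicontinuous, so the Alexandrov topology is always coarser than the
    metric one.  Conversely, suppose a metrically open [U ∋ p] contains no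
    diamond around [p], and fix [ε > 0] so small that the closed [ε]-ball about
    [p] lies in [U] and in a compact set.  Every diamond [I(x_n, y_n)] with
    [x_n ≪ p ≪ y_n], [x_n, y_n -> p] then leaves [U]; a timelike curve from
    [x_n] to the escaping point crosses the sphere [d(p, ·) = ε] at some [r_n]
    with [x_n ≤ r_n ≤ y_n].  A cluster point [c] of the [r_n] satisfies
    [(p, c), (c, p) ∈ K^+] because [K^+] is closed, so [c = p] by stable
    causality, contradicting [d(p, r_n) = ε]. *)

From Stdlib Require Import Reals List Lra Lia Classical ClassicalEpsilon.
From Coquelicot Require Import Coquelicot.
Open Scope R_scope.
Set Implicit Arguments.

Lemma lipschitz_modulus L u eps :
  0 <= L -> 0 <= u -> u < eps / (L + 1) -> L * u < eps.
Proof.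
  intros HL Hu Hlt.
  assert (Hscaled : u * (L + 1) < eps).
  { apply (Rmult_lt_compat_r (L + 1)) in Hlt; [|lra].
    unfold Rdiv in Hlt; rewrite Rmult_assoc, Rinv_l in Hlt; lra. }
  nra.
Qed.

Lemma lipschitz_continuity (h : R -> R) L :
  0 <= L -> (forall s t, Rabs (h s - h t) <= L * Rabs (s - t)) -> continuity h.
Proof.
  intros HL Hh x eps Heps. exists (eps / (L + 1)). split.
  - apply Rdiv_lt_0_compat; lra.
  - intros y [_ Hy]; simpl in *; unfold R_dist in *.
    eapply Rle_lt_trans; [apply Hh|].
    apply lipschitz_modulus; auto using Rabs_pos.
Qed.

Definition clamp (a b t : R) : R := Rmax a (Rmin b t).

Lemma clamp_in a b t : a <= b -> a <= clamp a b t <= b.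
Proof. intros Hab; unfold clamp, Rmax, Rmin; repeat destruct Rle_dec; lra. Qed.

Lemma clamp_id a b t : a <= t <= b -> clamp a b t = t.
Proof. intros Ht; unfold clamp, Rmax, Rmin; repeat destruct Rle_dec; lra. Qed.

Lemma clamp_lipschitz a b s t :
  a <= b -> Rabs (clamp a b s - clamp a b t) <= Rabs (s - t).
Proof.
  intros Hab; unfold clamp, Rmax, Rmin.
  repeat destruct Rle_dec; unfold Rabs; repeat destruct Rcase_abs; lra.
Qed.

(* Stdlib's [IVT] wants a function continuous on all of [R]: extend [f] by
   precomposing with the retraction [clamp a b] onto [[a, b]]. *)
Lemma lipschitz_IVT (f : R -> R) a b L c :
  a < b -> 0 <= L ->
  (forall s t, a <= s <= b -> a <= t <= b -> Rabs (f s - f t) <= L * Rabs (s - t)) ->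
  f a < c < f b -> exists z, a <= z <= b /\ f z = c.
Proof.
  intros Hab HL Hf Hc.
  set (h := fun t => f (clamp a b t) - c).
  assert (Hcont : continuity h).
  { apply (lipschitz_continuity h HL); intros s t; unfold h.
    replace (f (clamp a b s) - c - (f (clamp a b t) - c))
      with (f (clamp a b s) - f (clamp a b t)) by ring.
    eapply Rle_trans; [apply Hf; apply clamp_in; lra|].
    apply Rmult_le_compat_l; [lra|]. apply clamp_lipschitz; lra. }
  assert (Hha : h a < 0) by (unfold h; rewrite clamp_id; lra).
  assert (Hhb : 0 < h b) by (unfold h; rewrite clamp_id; lra).
  destruct (IVT h a b Hcont Hab Hha Hhb) as [z [Hz Hhz]].
  exists z; split; auto. unfold h in Hhz; rewrite clamp_id in Hhz; lra.
Qed.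

Section CausalMetricSpace.

Variables (X : Type) (d : X -> X -> R) (ll le : X -> X -> Prop).
Hypothesis d_metric : is_metric d.

Lemma dist_refl x : d x x = 0.
Proof. destruct d_metric as [_ [Hzero _]]; now apply Hzero. Qed.

Lemma dist_sym x y : d x y = d y x.
Proof. destruct d_metric as [_ [_ [Hsym _]]]; apply Hsym. Qed.

Lemma dist_triangle x y z : d x z <= d x y + d y z.
Proof. destruct d_metric as [_ [_ [_ Htri]]]; apply Htri. Qed.

Lemma dist_reverse_triangle p x y : Rabs (d p x - d p y) <= d x y.
Proof.
  pose proof (dist_triangle p x y); pose proof (dist_triangle p y x).
  rewrite (dist_sym y x) in *. apply Rabs_le; lra.
Qed.

Lemma d_open_inter (A B : X -> Prop) :
  d_open d A -> d_open d B -> d_open d (fun x => A x /\ B x).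
Proof.
  intros HA HB x [Ax Bx].
  destruct (HA x Ax) as [rA [HrA HballA]], (HB x Bx) as [rB [HrB HballB]].
  exists (Rmin rA rB); split; [now apply Rmin_pos|].
  intros y Hy; pose proof (Rmin_l rA rB); pose proof (Rmin_r rA rB).
  split; [apply HballA | apply HballB]; lra.
Qed.

Lemma d_open_Forall (I : Type) (l : list I) (U : I -> X -> Prop) :
  (forall i, d_open d (U i)) -> d_open d (fun x => forall i, In i l -> U i x).
Proof.
  intros HU; induction l as [|i l IH].
  - intros x _; exists 1; split; [lra|]. intros y _ j [].
  - intros x Hx.
    assert (Hx' : U i x /\ forall j, In j l -> U j x)
      by (split; [apply Hx; now left | intros j Hj; apply Hx; now right]).
    destruct (d_open_inter (HU i) IH Hx') as [r [Hr Hball]].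
    exists r; split; auto.
    intros y Hy j [<-|Hj]; destruct (Hball y Hy); auto.
Qed.

Definition cluster_point (r : nat -> X) (c : X) : Prop :=
  forall rho, 0 < rho -> forall N, exists n, (N <= n)%nat /\ d c (r n) < rho.

Lemma compact_cluster_point (K : X -> Prop) (r : nat -> X) :
  d_compact d K -> (forall n, K (r n)) -> exists c, K c /\ cluster_point r c.
Proof.
  intros HK Hr. apply NNPP; intros Hnone.
  (* the open ball [B(c, rho)] that [r] no longer visits after time [N] *)
  set (U := fun '(c, rho, N) y =>
              (forall n, (N <= n)%nat -> rho <= d c (r n)) /\ d c y < rho).
  destruct (HK _ U) as [l Hl].
  - intros [[c rho] N] y [Hfar Hy].
    exists (rho - d c y); split; [lra|]. intros z Hz; split; auto.
    pose proof (dist_triangle c y z); lra.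
  - intros y Ky.
    assert (Hy : ~ cluster_point r y) by (intros Hc; apply Hnone; eauto).
    apply not_all_ex_not in Hy as [rho Hy].
    apply imply_to_and in Hy as [Hrho Hy].
    apply not_all_ex_not in Hy as [N Hy].
    exists (y, rho, N); split.
    + intros n Hn; apply Rnot_lt_le; intros Hlt; apply Hy; eauto.
    + now rewrite dist_refl.
  - set (M := list_max (map snd l)).
    destruct (Hl (r M) (Hr M)) as [[[c rho] N] [Hin [Hfar Hnear]]].
    assert (HNM : (N <= M)%nat).
    { assert (Hall : List.Forall (fun k => (k <= M)%nat) (map snd l))
        by now apply list_max_le.
      rewrite List.Forall_forall in Hall. apply Hall, (in_map snd _ _ Hin). }
    specialize (Hfar M HNM); lra.
Qed.

Lemma lipschitz_curve_small_steps (g : R -> X) a b rho :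
  lipschitz_on d (cint a b) g -> 0 < rho ->
  exists delta, 0 < delta /\ forall s t, cint a b s -> cint a b t ->
    Rabs (s - t) < delta -> d (g s) (g t) < rho.
Proof.
  intros [L [HL Hg]] Hrho. exists (rho / (L + 1)); split.
  - apply Rdiv_lt_0_compat; lra.
  - intros s t Hs Ht Hst. eapply Rle_lt_trans; [apply Hg; auto|].
    apply lipschitz_modulus; auto using Rabs_pos.
Qed.

Lemma lipschitz_curve_near_ends (g : R -> X) a b rho :
  a < b -> lipschitz_on d (cint a b) g -> 0 < rho ->
  (exists s, a <= s < b /\ d (g s) (g b) < rho) /\
  (exists s, a < s <= b /\ d (g a) (g s) < rho).
Proof.
  intros Hab Hg Hrho.
  destruct (lipschitz_curve_small_steps Hg Hrho) as [delta [Hdelta Hsmall]].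
  split.
  - set (s := Rmax a (b - delta / 2)).
    assert (Hs : a <= s < b /\ b - delta / 2 <= s)
      by (unfold s, Rmax; destruct Rle_dec; lra).
    exists s; split; [lra|].
    apply Hsmall; unfold cint; try lra. unfold Rabs; destruct Rcase_abs; lra.
  - set (s := Rmin b (a + delta / 2)).
    assert (Hs : a < s <= b /\ s <= a + delta / 2)
      by (unfold s, Rmin; destruct Rle_dec; lra).
    exists s; split; [lra|].
    apply Hsmall; unfold cint; try lra. unfold Rabs; destruct Rcase_abs; lra.
Qed.

Lemma curve_crosses_sphere (g : R -> X) a b p eps :
  a < b -> lipschitz_on d (cint a b) g -> d p (g a) < eps < d p (g b) ->
  exists z, a < z < b /\ d p (g z) = eps.
Proof.
  intros Hab [L [HL Hg]] Heps.
  destruct (@lipschitz_IVT (fun t => d p (g t)) a b L eps Hab HL) as [z [Hz Hgz]];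
    auto.
  - intros s t Hs Ht. eapply Rle_trans; [apply dist_reverse_triangle|].
    apply Hg; unfold cint; lra.
  - exists z; split; auto.
    destruct (Req_dec a z) as [<-|]; [lra|].
    destruct (Req_dec z b) as [->|]; [lra|]. lra.
Qed.

Lemma K_plus_of_approximations x y :
  (forall rho, 0 < rho -> exists a b, le a b /\ d x a < rho /\ d y b < rho) ->
  K_plus d le x y.
Proof.
  intros Happrox Rel _ Hclosed Hle. apply NNPP; intros Hxy.
  destruct (Hclosed x y Hxy) as [rho [Hrho Hfar]].
  destruct (Happrox rho Hrho) as [a [b [Hab [Ha Hb]]]].
  exact (Hfar a b Ha Hb (Hle a b Hab)).
Qed.

Lemma stably_causal_no_links_through_sphere (K : X -> Prop) p eps :
  stably_causal d le -> d_compact d K -> (forall q, d p q <= eps -> K q) ->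
  0 < eps ->
  ~ (forall rho, 0 < rho -> exists x r y,
       le x r /\ le r y /\ d p x < rho /\ d p y < rho /\ d p r = eps).
Proof.
  intros Hstable HK Hball Heps Hlinks.
  destruct (choice (fun n r => d p r = eps /\ exists x y, le x r /\ le r y /\
                    d p x < / INR (S n) /\ d p y < / INR (S n))) as [rs Hrs].
  { intros n. destruct (Hlinks (/ INR (S n))) as [x [r [y Hxry]]].
    - apply Rinv_0_lt_compat, lt_0_INR; lia.
    - exists r; firstorder. }
  destruct (@compact_cluster_point K rs HK) as [c [_ Hc]].
  { intros n; apply Hball; rewrite (proj1 (Hrs n)); lra. }
  assert (Hclose : forall rho, 0 < rho ->
                     exists n, d c (rs n) < rho /\ / INR (S n) < rho).
  { intros rho Hrho. destruct (archimed_cor1 rho Hrho) as [N [HN HN0]].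
    destruct (Hc rho Hrho N) as [n [Hn Hcn]].
    exists n; split; auto. apply (Rlt_trans _ (/ INR N)); auto.
    apply Rinv_lt_contravar.
    - apply Rmult_lt_0_compat; apply lt_0_INR; lia.
    - apply lt_INR; lia. }
  assert (Hpc : K_plus d le p c).
  { apply K_plus_of_approximations; intros rho Hrho.
    destruct (Hclose rho Hrho) as [n [Hcn Hn]].
    destruct (Hrs n) as [_ [x [y [Hxr [_ [Hx _]]]]]].
    exists x, (rs n); repeat split; auto; lra. }
  assert (Hcp : K_plus d le c p).
  { apply K_plus_of_approximations; intros rho Hrho.
    destruct (Hclose rho Hrho) as [n [Hcn Hn]].
    destruct (Hrs n) as [_ [x [y [_ [Hry [_ Hy]]]]]].
    exists (rs n), y; repeat split; auto; lra. }
  destruct (Hstable p c Hpc Hcp).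
  destruct (Hclose eps Heps) as [n [Hpn _]].
  rewrite (proj1 (Hrs n)) in Hpn; lra.
Qed.

Section PreLength.

Variable tau : X -> X -> Rbar.
Hypothesis tau_LPLS : LPLS_on d ll le (@whole X) tau.

Lemma chronological_future_open x : d_open d (ll x).
Proof.
  destruct tau_LPLS as [_ [_ [Hlsc [_ [_ Hpos]]]]].
  intros p Hxp. apply (Hpos x p I I) in Hxp.
  destruct (Hlsc x p 0 I I Hxp) as [delta [Hdelta Hnear]].
  exists delta; split; auto. intros q Hq. apply (Hpos x q I I).
  apply Hnear; try exact I; auto. now rewrite dist_refl.
Qed.

Lemma chronological_past_open y : d_open d (fun q => ll q y).
Proof.
  destruct tau_LPLS as [_ [_ [Hlsc [_ [_ Hpos]]]]].
  intros p Hpy. apply (Hpos p y I I) in Hpy.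
  destruct (Hlsc p y 0 I I Hpy) as [delta [Hdelta Hnear]].
  exists delta; split; auto. intros q Hq. apply (Hpos q y I I).
  apply Hnear; try exact I; auto. now rewrite dist_refl.
Qed.

Lemma diamond_open x y : d_open d (diamond ll x y).
Proof.
  exact (d_open_inter (chronological_future_open (x := x))
                      (chronological_past_open (y := y))).
Qed.

Lemma alexandrov_open_d_open U : alexandrov_open ll U -> d_open d U.
Proof.
  intros HA p Up. destruct (HA p Up) as [l [Hp Hsub]].
  destruct (d_open_Forall l (fun xy => diamond ll (fst xy) (snd xy))
              (fun xy => diamond_open (x := fst xy) (y := snd xy)) Hp) as [r [Hr Hball]].
  exists r; split; auto.
Qed.

End PreLength.

Section LengthSpace.

Variable tau : X -> X -> Rbar.
Hypothesis LLS : LorentzianLengthSpace d ll le tau.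

Lemma timelike_neighbours p rho :
  0 < rho -> (exists x, ll x p /\ d p x < rho) /\ (exists y, ll p y /\ d p y < rho).
Proof.
  intros Hrho. destruct LLS as [_ [_ [[_ Htimelike] [_ [Hloc _]]]]].
  destruct (Hloc p) as [Om [om [[V [_ [Vp HVOm]]] [_ [_ [_ [_ [Hchron _]]]]]]]].
  destruct (Hchron p (HVOm p Vp)) as [[y0 [_ Hpy0]] [x0 [_ Hx0p]]].
  split.
  - destruct (Htimelike _ _ Hx0p) as [g [a [b [Hab [Hg [Ha Hb]]]]]].
    pose proof Hg as [_ [Hlip [_ Hmono]]].
    destruct (lipschitz_curve_near_ends Hab Hlip Hrho) as [[s [Hs Hgs]] _].
    exists (g s); split.
    + rewrite <- Hb. apply Hmono; unfold cint; lra.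
    + rewrite dist_sym, <- Hb; exact Hgs.
  - destruct (Htimelike _ _ Hpy0) as [g [a [b [Hab [Hg [Ha Hb]]]]]].
    pose proof Hg as [_ [Hlip [_ Hmono]]].
    destruct (lipschitz_curve_near_ends Hab Hlip Hrho) as [_ [s [Hs Hgs]]].
    exists (g s); split.
    + rewrite <- Ha. apply Hmono; unfold cint; lra.
    + rewrite <- Ha; exact Hgs.
Qed.

Lemma causal_point_on_sphere p eps x q :
  ll x q -> d p x < eps < d p q -> exists r, le x r /\ le r q /\ d p r = eps.
Proof.
  intros Hxq Heps.
  destruct LLS as [_ [[[_ [_ [_ Hllle]]] _] [[_ Htimelike] _]]].
  destruct (Htimelike _ _ Hxq) as [g [a [b [Hab [Hg [Ha Hb]]]]]].
  pose proof Hg as [_ [Hlip [_ Hmono]]].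
  destruct (@curve_crosses_sphere g a b p eps Hab Hlip) as [z [Hz Hgz]].
  { rewrite Ha, Hb; exact Heps. }
  exists (g z); repeat split; auto.
  - rewrite <- Ha. apply Hllle; try exact I. apply Hmono; unfold cint; lra.
  - rewrite <- Hb. apply Hllle; try exact I. apply Hmono; unfold cint; lra.
Qed.

Lemma causal_links_through_sphere p eps :
  0 < eps ->
  (forall x y, diamond ll x y p -> exists q, diamond ll x y q /\ eps < d p q) ->
  forall rho, 0 < rho -> exists x r y,
    le x r /\ le r y /\ d p x < rho /\ d p y < rho /\ d p r = eps.
Proof.
  intros Heps Hescape rho Hrho.
  destruct LLS as [_ [[[_ [Htrans [_ Hllle]]] _] _]].
  pose proof (Rmin_l rho eps); pose proof (Rmin_r rho eps).
  destruct (timelike_neighbours p (Rmin_pos rho eps Hrho Heps))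
    as [[x [Hxp Hx]] [y [Hpy Hy]]].
  destruct (Hescape x y (conj Hxp Hpy)) as [q [[Hxq Hqy] Hq]].
  destruct (@causal_point_on_sphere p eps x q Hxq) as [r [Hxr [Hrq Hr]]]; [lra|].
  assert (Hqy' : le q y) by (apply Hllle; try exact I; auto).
  exists x, r, y; repeat split; try lra; auto.
  apply (Htrans r q y); try exact I; auto.
Qed.

Lemma d_open_alexandrov_open U :
  locally_compact d -> stably_causal d le -> d_open d U -> alexandrov_open ll U.
Proof.
  intros Hlc Hstable HU p Up.
  enough (Hdiamond : exists x y, diamond ll x y p /\ forall q, diamond ll x y q -> U q).
  { destruct Hdiamond as [x [y [Hp Hsub]]]. exists ((x, y) :: nil); split.
    - intros xy [<-|[]]; exact Hp.
    - intros q Hq; apply Hsub, (Hq (x, y)); now left. }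
  apply NNPP; intros Hnone.
  destruct (HU p Up) as [rU [HrU HballU]].
  destruct (Hlc p) as [K [[V [HV [Vp HVK]]] HK]].
  destruct (HV p Vp) as [rV [HrV HballV]].
  set (eps := Rmin rU rV / 2).
  assert (Heps : 0 < eps /\ eps < rU /\ eps < rV)
    by (unfold eps, Rmin; destruct Rle_dec; lra).
  apply (@stably_causal_no_links_through_sphere K p eps Hstable HK); [| lra |].
  - intros q Hq; apply HVK, HballV; lra.
  - apply causal_links_through_sphere; [lra|].
    intros x y Hxy. apply NNPP; intros Hinside. apply Hnone.
    exists x, y; split; auto. intros q Hq. apply NNPP; intros Hout.
    apply Hinside. exists q; split; auto.
    apply Rnot_le_lt; intros Hle. apply Hout, HballU; lra.
Qed.

End LengthSpace.

End CausalMetricSpace.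

Theorem proposition3p15 (X : Type) (d : X -> X -> R) (ll le : X -> X -> Prop)
  (tau : X -> X -> Rbar) :
  LorentzianLengthSpace d ll le tau ->
  locally_compact d ->
  stably_causal d le ->
  strongly_causal d ll.
Proof.
  intros HLLS Hlc Hstable U.
  pose proof HLLS as [Hmetric [HLPLS _]].
  split.
  - apply (alexandrov_open_d_open Hmetric HLPLS).
  - apply (d_open_alexandrov_open Hmetric HLLS); auto.
Qed.
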